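(* Let $n\ge 2$, let $\sigma=(1,2,\dots,n-1)\in S_n$, and let $\rho\in S_n$ be defined by $\rho(n-1)=n$, $\rho(n)=n-1$, $\rho(k)=n-1-k$ for $1\le k\le n-2$. Let $\tau\in S_n$ be a permutation of order $2$ with $\tau(n)=n-1$ and $\tau\sigma^k\tau=\sigma^{\tau(k)}\tau\sigma^{\tau\rho\tau(k)}$ for all $k\in\{1,\dots,n-2\}$ (such a $\tau$ exists exactly when $IK_n$ is a $G$-graph, and then $IK_n\cong\Phi(\langle\sigma,\tau\rangle,\{\sigma,\tau\})$). Then all the orbits of the action of the group $\langle\rho,\tau\rangle$ on $\{1,\dots,n\}$ have six elements, except for either one or two orbits with two elements and, if $n$ is odd, one orbit with either one or three elements.
   Context: $S_n$ is the symmetric group on $\{1,\dots,n\}$ with product given by composition of functions (rightmost applied first). $K_n$ is the complete simple graph on $n$ vertices and $IK_n$ its incidence graph. For a group $G$ and a multiset $S$ of elements of $G$, $\Phi(G,S)$ is the multigraph whose vertex set is the union over the members $s$ of $S$ of the right cosets $\langle s\rangle x$, $x\in G$, with one edge labeled $g$ between $\langle s\rangle x$ and $\langle t\rangle y$ ($s,t$ distinct members of $S$) for each $g\in\langle s\rangle x\cap\langle t\rangle y$; a $G$-graph is a multigraph isomorphic to some $\Phi(G,S)$. *)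

(* Points 1..n of the paper are encoded as 'I_n,
   the paper's point k (1 <= k <= n) being the ordinal of value k-1. *)
From HB Require Import structures.
From mathcomp Require Import all_boot all_order all_fingroup.
From mathcomp Require Import zify.
Set Implicit Arguments.
Unset Strict Implicit.
Unset Printing Implicit Defensive.

Definition sigma0 (n i : nat) : nat :=
  if i.+2 < n then i.+1 else if i.+2 == n then 0 else i.
Definition rho0 (n i : nat) : nat :=
  if i.+2 == n then n.-1 else if i.+1 == n then n - 2 else n - 3 - i.

Lemma sigma0_lt n (i : 'I_n) : sigma0 n i < n.
Proof. case: i => i Hi /=; rewrite /sigma0; repeat case: ifP => /eqP ?; lia. Qed.
Lemma rho0_lt n (i : 'I_n) : rho0 n i < n.
Proof. case: i => i Hi /=; rewrite /rho0; repeat case: ifP => /eqP ?; lia. Qed.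

Definition sigma_fun n (i : 'I_n) : 'I_n := Ordinal (sigma0_lt i).
Definition rho_fun n (i : 'I_n) : 'I_n := Ordinal (rho0_lt i).

Lemma sigma_inj n : injective (@sigma_fun n).
Proof.
move=> [i Hi] [j Hj] /(congr1 val) /=; rewrite /sigma0 => H; apply/val_inj => /=.
move: H; repeat case: ifP => /eqP ?; lia.
Qed.
Lemma rho_inj n : injective (@rho_fun n).
Proof.
move=> [i Hi] [j Hj] /(congr1 val) /=; rewrite /rho0 => H; apply/val_inj => /=.
move: H; repeat case: ifP => /eqP ?; lia.
Qed.

Definition sigma n : {perm 'I_n} := perm (@sigma_inj n).
Definition rho n : {perm 'I_n} := perm (@rho_inj n).

Definition orbits_of n (G : {set {perm 'I_n}}) : {set {set 'I_n}} :=
  [set orbit 'P G x | x : 'I_n].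

(* With r = rho and t = tau, both involutions, the relation imposed on tau
   yields the braid relation t r t = r t r, so <r, t> is a quotient of S_3:
   every orbit is the union of at most two orbits {y, rt y, tr y} of the
   rotation rt, hence has 1, 2, 3 or 6 points.  An orbit has odd size exactly
   when r fixes one of its points, and r has a fixed point only for odd n,
   and then a single one.  A 2-orbit consists of points where t = r <> id;
   besides the pair {n-1, n}, swapped by both r and t, the relation on tau
   allows at most one more such orbit. *)

From mathcomp Require Import all_boot all_fingroup zify.
Set Implicit Arguments.
Unset Strict Implicit.
Unset Printing Implicit Defensive.

Section BraidedInvolutions.

Variables (T : finType) (r t : {perm T}).
Hypotheses (rK : involutive r) (tK : involutive t).
Hypothesis braid : forall y, t (r (t y)) = r (t (r y)).

Local Notation G := <<[set r; t]>>%g.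

(* The orbit of y under the rotation rt, whose square is tr by braid. *)
Definition rt_cycle y := [set y; r (t y); t (r y)].

Lemma rtrtE y : r (t (r (t y))) = t (r y).
Proof. by rewrite braid rK. Qed.

Lemma rt_cycle_eq y z : z \in rt_cycle y -> rt_cycle z = rt_cycle y.
Proof.
rewrite !inE => /orP[/orP[]|] /eqP-> //; apply/setP => w; rewrite !inE.
- by rewrite rtrtE rK tK orbC orbA.
- by rewrite tK rK braid rK -orbA orbC.
Qed.

Lemma tr_fixE y : (t (r y) == y) = (r (t y) == y).
Proof. by apply/eqP/eqP => E; rewrite -{1}E ?rK ?tK. Qed.

Lemma card_rt_cycle y : #|rt_cycle y| = if r (t y) == y then 1 else 3.
Proof.
have tr_rt := tr_fixE y.
case: eqP => [rty|/eqP rty].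
  have try : t (r y) = y by apply/eqP; rewrite tr_rt rty.
  by rewrite /rt_cycle rty try !setUid cards1.
rewrite /rt_cycle -setUA !cardsU1 !inE cards1 !(eq_sym y) tr_rt (negPf rty) /=.
suff /negPf-> : r (t y) != t (r y) by [].
by apply: contra rty; rewrite -rtrtE => /eqP/perm_inj/perm_inj<-.
Qed.

Lemma mem_rt_cycle_r y z :
  z \in rt_cycle y -> r z \in rt_cycle (r y) /\ t z \in rt_cycle (r y).
Proof.
by rewrite !inE => /orP[/orP[]|] /eqP->; rewrite ?rK ?tK -?braid ?eqxx ?orbT.
Qed.

Lemma orbit_braid x : orbit 'P G x = rt_cycle x :|: rt_cycle (r x).
Proof.
pose S := rt_cycle x :|: rt_cycle (r x).
have S_stable g : g \in [set r; t] -> {in S, forall z, g z \in S}.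
  move=> /set2P[]-> z /setUP[] /mem_rt_cycle_r[]; rewrite ?rK => rz tz;
  by rewrite /S in_setU ?rz ?tz ?orbT.
have Gr : r \in G by rewrite mem_gen // !inE eqxx.
have Gt : t \in G by rewrite mem_gen // !inE eqxx orbT.
have cycle_sub y : y \in orbit 'P G x -> rt_cycle y \subset orbit 'P G x.
  move=> Oy; apply/subsetP => z; rewrite !inE => /orP[/orP[]|] /eqP->;
  by rewrite ?(orbit_actr 'P _ _ Gr, orbit_actr 'P _ _ Gt).
apply/eqP; rewrite eqEsubset acts_sub_orbit ?inE ?eqxx //.
  by rewrite subUset !cycle_sub ?(orbit_actr 'P _ _ Gr) ?orbit_refl.
rewrite gen_subG; apply/subsetP => g rt_g; apply/astabsP => z /=.
have gK : involutive g by case/set2P: rt_g => ->.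
by apply/idP/idP => [/(S_stable g rt_g)|/(S_stable g rt_g)//]; rewrite gK.
Qed.

Lemma card_orbit_braid x : #|orbit 'P G x| =
  (if r x \in rt_cycle x then 1 else 2) * (if r (t x) == x then 1 else 3).
Proof.
rewrite orbit_braid; case: ifP => [/rt_cycle_eq->|rx_out].
  by rewrite setUid card_rt_cycle mul1n.
have disj : [disjoint rt_cycle x & rt_cycle (r x)].
  apply/pred0P => z /=; apply/negbTE/andP => -[/rt_cycle_eq Ex /rt_cycle_eq Erx].
  by move: rx_out; rewrite -Ex Erx !inE eqxx.
have rtr_fix : (r (t (r x)) == r x) = (r (t x) == x).
  by rewrite (inj_eq perm_inj) tr_fixE.
rewrite cardsU (disjoint_setI0 disj) cards0 subn0 !card_rt_cycle rtr_fix.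
by case: ifP.
Qed.

Lemma card_orbit_braid_in x : #|orbit 'P G x| \in [:: 1; 2; 3; 6].
Proof. by rewrite card_orbit_braid; case: ifP; case: ifP. Qed.

Lemma card_orbit_braid2 x : (#|orbit 'P G x| == 2) = (t x == r x) && (r x != x).
Proof.
have -> : (t x == r x) = (r (t x) == x).
  by apply/eqP/eqP => [->|E]; [rewrite rK | rewrite -[in RHS]E rK].
rewrite card_orbit_braid; have [rtx|_] := eqVneq (r (t x)) x; last by case: ifP.
have trx : t (r x) = x by apply/eqP; rewrite tr_fixE rtx.
by rewrite !inE rtx trx !orbb; case: (r x == x).
Qed.

Lemma card_orbit_braid13 x :
  (#|orbit 'P G x| == 1) || (#|orbit 'P G x| == 3) = (r x \in rt_cycle x).
Proof. by rewrite card_orbit_braid; case: ifP; case: ifP. Qed.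

Lemma rt_cycle_fixedP x :
  reflect (exists2 y, y \in rt_cycle x & r y = y) (r x \in rt_cycle x).
Proof.
apply: (iffP idP) => [|[y Cy ry]]; last first.
  have [/[!ry] /rt_cycle_eq Crx _] := mem_rt_cycle_r Cy.
  by rewrite -(rt_cycle_eq Cy) Crx !inE eqxx.
rewrite !inE => /orP[/orP[]|] /eqP rx.
- by exists x; rewrite ?inE ?eqxx.
- exists (t (r x)); first by rewrite !inE eqxx orbT.
  by rewrite -braid -(perm_inj rx).
- have rtx : r (t x) = t x.
    by apply: (@perm_inj _ t); rewrite braid -rx rK tK.
  by exists (t x); rewrite // !inE rtx eqxx orbT.
Qed.

Lemma odd_orbitsE :
  [set O in [set orbit 'P G x | x : T] | (#|O| == 1) || (#|O| == 3)] =
  [set orbit 'P G y | y in [set y | r y == y]].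
Proof.
apply/setP => O; rewrite inE; apply/andP/imsetP => [[/imsetP[x _ ->]]|[y]].
  rewrite card_orbit_braid13 => /rt_cycle_fixedP[y Cy ry].
  exists y; first by rewrite inE ry.
  by apply/orbit_eqP; rewrite orbit_sym orbit_braid in_setU Cy.
rewrite inE => /eqP ry ->; split; first exact: imset_f.
by rewrite card_orbit_braid13 ry !inE eqxx.
Qed.

End BraidedInvolutions.

Section SigmaRho.

Variable n : nat.
Implicit Types x y w : 'I_n.

Lemma sigmaE x : sigma n x = sigma0 n x :> nat.
Proof. by rewrite /sigma permE. Qed.

Lemma rhoE x : rho n x = rho0 n x :> nat.
Proof. by rewrite /rho permE. Qed.

Lemma sigma_expE x e : x < n.-1 -> (sigma n ^+ e)%g x = (x + e) %% n.-1 :> nat.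
Proof.
move=> x_lt; elim: e => [|e IH]; first by rewrite expg0 perm1 addn0 modn_small.
rewrite expgSr permM sigmaE IH addnS -addn1 -(modnDml (x + e) 1).
have : (x + e) %% n.-1 < n.-1 by rewrite ltn_pmod //; lia.
move: (_ %% _) => v v_lt; rewrite /sigma0 addn1.
case: ltnP => [v_small|v_big]; first by rewrite modn_small //; lia.
have v_last : v.+1 = n.-1 by lia.
by rewrite ifT ?v_last ?modnn //; lia.
Qed.

Lemma sigma_exp_last x e : x = n.-1 :> nat -> (sigma n ^+ e)%g x = x.
Proof.
move=> x_last; elim: e => [|e IH]; first by rewrite expg0 perm1.
rewrite expgSr permM IH; apply: val_inj; rewrite /= sigmaE /sigma0.
by rewrite ifF ?ifF; lia.
Qed.

Lemma sigma_exp_lastE x e :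
  ((sigma n ^+ e)%g x == n.-1 :> nat) = (x == n.-1 :> nat).
Proof.
have [x_last|x_lt] := eqVneq (x : nat) n.-1.
  by rewrite sigma_exp_last // x_last eqxx.
have {}x_lt : x < n.-1 by have := ltn_ord x; lia.
by rewrite sigma_expE //; apply/negbTE; rewrite neq_ltn ltn_pmod //; lia.
Qed.

Lemma sigma_expSC x y : x < n.-1 -> y < n.-1 ->
  (sigma n ^+ x.+1)%g y = (sigma n ^+ y.+1)%g x.
Proof.
by move=> x_lt y_lt; apply: val_inj; rewrite /= !sigma_expE // !addnS addnC.
Qed.

Lemma sigma_exp_penultE x y : x < n - 2 -> y < n - 2 ->
  ((sigma n ^+ x.+1)%g y == n - 2 :> nat) = (x + y == n - 3).
Proof.
move=> x_lt y_lt; rewrite sigma_expE; last by lia.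
have [small|big] := ltnP (y + x.+1) n.-1.
  by rewrite modn_small //; apply/eqP/eqP; lia.
by rewrite -(subnK big) modnDr modn_small; [apply/eqP/eqP|]; lia.
Qed.

Lemma sigma_exp_eqE w a b : w < n.-1 ->
  ((sigma n ^+ a)%g w == (sigma n ^+ b)%g w) = (a == b %[mod n.-1]).
Proof. by move=> w_lt; rewrite -val_eqE /= !sigma_expE // eqn_modDl. Qed.

Lemma rho_small x : x < n - 2 -> rho n x = n - 3 - x :> nat.
Proof. by rewrite rhoE /rho0; repeat case: ifP => /eqP ?; lia. Qed.

Lemma rho_last x : x = n.-1 :> nat -> rho n x = n - 2 :> nat.
Proof. by rewrite rhoE /rho0; repeat case: ifP => /eqP ?; lia. Qed.

Lemma rho_penult x : x = n - 2 :> nat -> rho n x = n.-1 :> nat.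
Proof. by rewrite rhoE /rho0; repeat case: ifP => /eqP ?; lia. Qed.

Lemma rhoK : involutive (rho n).
Proof.
move=> x; apply: val_inj => /=; have [x_small|x_top] := ltnP x (n - 2).
  have rx_small : rho n x < n - 2 by rewrite rho_small //; lia.
  by rewrite (rho_small rx_small) (rho_small x_small); lia.
have [x_pen|x_last] : x = n - 2 :> nat \/ x = n.-1 :> nat by have := ltn_ord x; lia.
- by rewrite (rho_last (rho_penult x_pen)).
- by rewrite (rho_penult (rho_last x_last)).
Qed.

Hypothesis n_ge2 : 2 <= n.

Lemma rho_fixedE x : (rho n x == x) = (x + x + 3 == n).
Proof.
rewrite -val_eqE /=; have [x_small|x_top] := ltnP x (n - 2).
  by rewrite rho_small //; apply/eqP/eqP; lia.
have [x_pen|x_last] : x = n - 2 :> nat \/ x = n.-1 :> nat by have := ltn_ord x; lia.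
- by rewrite rho_penult //; apply/eqP/eqP; lia.
- by rewrite rho_last //; apply/eqP/eqP; lia.
Qed.

Lemma rho_fixed_eq x y : rho n x = x -> rho n y = y -> x = y.
Proof.
move=> /eqP + /eqP; rewrite !rho_fixedE => /eqP x_fix /eqP y_fix.
by apply: val_inj => /=; lia.
Qed.

Lemma card_rho_fixed : #|[set x | rho n x == x]| = odd n.
Proof.
have le1 : #|[set x | rho n x == x]| <= 1.
  by apply/card_le1_eqP => x y /[!inE] /eqP rx /eqP ry; apply: rho_fixed_eq.
case n_odd : (odd n).
  have mid_lt : n./2.-1 < n by lia.
  apply/eqP; rewrite eqn_leq le1 card_gt0; apply/set0Pn; exists (Ordinal mid_lt).
  by rewrite inE rho_fixedE /=; have := odd_double_half n; rewrite n_odd; lia.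
apply/eqP; rewrite cards_eq0; apply/eqP/setP => x; rewrite !inE rho_fixedE.
by apply/negbTE/eqP => sum; move: n_odd; rewrite -sum addnn oddD odd_double.
Qed.

End SigmaRho.

Section TauRelations.

Variables (n : nat) (tau : {perm 'I_n}).
Hypotheses (n_ge2 : 2 <= n) (tauK : involutive tau).
Hypothesis tau_last : forall x : 'I_n, x = n.-1 :> nat -> tau x = n - 2 :> nat.
Hypothesis tau_rel : forall j : 'I_n, j.+3 <= n -> forall x : 'I_n,
  tau ((sigma n ^+ j.+1)%g (tau x)) =
  (sigma n ^+ (tau j).+1)%g (tau ((sigma n ^+ (tau (rho n (tau j))).+1)%g x)).

Local Notation G := <<[set rho n; tau]>>%g.
Implicit Types x y j : 'I_n.

Lemma tau_penult x : x = n - 2 :> nat -> tau x = n.-1 :> nat.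
Proof.
move=> x_pen; have last_lt : n.-1 < n by lia.
have tau_x : tau (Ordinal last_lt) = x by apply: val_inj; rewrite /= tau_last.
by rewrite -tau_x tauK.
Qed.

Lemma tau_small x : x < n - 2 -> tau x < n - 2.
Proof.
move=> x_small; rewrite ltnNge; apply/negP => tx_top.
have [tx_pen|tx_last] : tau x = n - 2 :> nat \/ tau x = n.-1 :> nat.
  by have := ltn_ord (tau x); lia.
- by have := tau_penult tx_pen; rewrite tauK; lia.
- by have := tau_last tx_last; rewrite tauK; lia.
Qed.

Lemma tau_eq_rho_top x : n - 2 <= x -> tau x = rho n x.
Proof.
move=> x_top; apply: val_inj => /=.
have [x_pen|x_last] : x = n - 2 :> nat \/ x = n.-1 :> nat by have := ltn_ord x; lia.
- by rewrite tau_penult ?rho_penult.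
- by rewrite tau_last ?rho_last.
Qed.

Lemma tau_rho_small j : j < n - 2 -> tau (rho n j) = rho n (tau (rho n (tau j))).
Proof.
move=> j_small.
have rj_small : rho n j < n - 2 by rewrite rho_small //; lia.
have k_small : tau (rho n (tau j)) < n - 2.
  by rewrite tau_small // rho_small ?tau_small //; lia.
have trj_small := tau_small rj_small.
have j3 : j.+3 <= n by lia.
(* At x = tau (rho j) the left side is tau (n - 2) = n - 1, the point fixed
   by sigma; this pins down the argument of sigma on the right. *)
have E := tau_rel j3 (tau (rho n j)); rewrite tauK in E.
have pen : (sigma n ^+ j.+1)%g (rho n j) = n - 2 :> nat.
  by apply/eqP; rewrite sigma_exp_penultE // rho_small //; apply/eqP; lia.
have W_last :
    tau ((sigma n ^+ (tau (rho n (tau j))).+1)%g (tau (rho n j))) = n.-1 :> nat.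
  by apply/eqP; rewrite -(sigma_exp_lastE _ (tau j).+1) -E (tau_penult pen).
have := tau_last W_last; rewrite tauK => /eqP.
rewrite sigma_exp_penultE // => /eqP sum.
by apply: val_inj => /=; rewrite rho_small //; lia.
Qed.

Lemma tau_rho_braid y : tau (rho n (tau y)) = rho n (tau (rho n y)).
Proof.
have [y_small|y_top] := ltnP y (n - 2).
  by rewrite tau_rho_small ?tau_small // tauK.
have ty := tau_eq_rho_top y_top.
by rewrite ty rhoK -ty tauK ty.
Qed.

Lemma tau_eq_rho_small y y' : y < n - 2 -> y' < n - 2 ->
  tau y = rho n y -> tau y' = rho n y' -> y' = y \/ y' = rho n y.
Proof.
move=> y_small y'_small ty ty'.
have ry_small : rho n y < n - 2 by rewrite rho_small //; lia.
have ry'_small : rho n y' < n - 2 by rewrite rho_small //; lia.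
have y3 : y.+3 <= n by lia.
have y'3 : y'.+3 <= n by lia.
have swap_y : (sigma n ^+ y.+1)%g y' = (sigma n ^+ y'.+1)%g y.
  by apply: sigma_expSC; lia.
have swap_ry : (sigma n ^+ (rho n y).+1)%g (rho n y') =
               (sigma n ^+ (rho n y').+1)%g (rho n y).
  by apply: sigma_expSC; lia.
have E := tau_rel y3 (tau y'); have E' := tau_rel y'3 (tau y).
rewrite tauK ty rhoK ty ty' swap_y swap_ry in E.
rewrite tauK ty' rhoK ty' ty E in E'.
(* Both exponents act alike on w: either w is fixed by sigma or they agree. *)
move: E'; set w := tau _ => E'.
have [w_small|w_top] := ltnP w n.-1.
  move/eqP: E'; rewrite sigma_exp_eqE // !modn_small; try lia.
  by rewrite eqSS !rho_small // => /eqP eq_r; left; apply: val_inj => /=; lia.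
have w_last : w = n.-1 :> nat by have := ltn_ord w; lia.
have := tau_last w_last; rewrite /w tauK => /eqP; rewrite sigma_exp_penultE //.
rewrite !rho_small // => /eqP sum; right.
by apply: val_inj => /=; rewrite rho_small //; lia.
Qed.

Let rho_in_G : rho n \in G.
Proof. by rewrite mem_gen // !inE eqxx. Qed.

Lemma orbit_top x y : n - 2 <= x -> n - 2 <= y -> orbit 'P G x = orbit 'P G y.
Proof.
move=> x_top y_top; have [->|y_ne] := eqVneq y x; first by [].
have -> : y = rho n x.
  move: y_ne; rewrite -val_eqE /= => /eqP y_ne; apply: val_inj => /=.
  have x_lt := ltn_ord x; have y_lt := ltn_ord y.
  have [x_pen|x_last] : x = n - 2 :> nat \/ x = n.-1 :> nat by lia.
  - by rewrite rho_penult //; lia.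
  - by rewrite rho_last //; lia.
by rewrite (orbit_act 'P).
Qed.

Lemma card_two_orbits : #|[set O in orbits_of G | #|O| == 2]| \in [:: 1; 2].
Proof.
have card2E := card_orbit_braid2 (@rhoK n) tauK tau_rho_braid.
have last_lt : n.-1 < n by lia.
set top := Ordinal last_lt; set P2 := [set O in _ | _].
have top_ge : n - 2 <= top by rewrite /=; lia.
have top_in : orbit 'P G top \in P2.
  rewrite inE /orbits_of imset_f //= card2E tau_eq_rho_top // eqxx /=.
  by rewrite -val_eqE /= rho_last //; lia.
have small_of O : O \in P2 -> O != orbit 'P G top ->
    exists2 x, O = orbit 'P G x & (x < n - 2) && (tau x == rho n x).
  move=> /[!inE] /andP[/imsetP[x _ ->]]; rewrite card2E => /andP[tx _] ne_top.
  exists x => //; rewrite tx andbT ltnNge; apply: contra ne_top => x_top.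
  by rewrite (orbit_top x_top top_ge).
rewrite (cardsD1 (orbit 'P G top)) top_in.
suff: #|P2 :\ orbit 'P G top| <= 1 by case: #|_| => [|[]].
apply/card_le1_eqP => O O' /setD1P[ne P] /setD1P[ne' P'].
have [x -> /andP[x_small /eqP tx]] := small_of O P ne.
have [x' -> /andP[x'_small /eqP tx']] := small_of O' P' ne'.
by case: (tau_eq_rho_small x_small x'_small tx tx') => ->; rewrite ?(orbit_act 'P).
Qed.

End TauRelations.

Theorem proposition9 (n : nat) (tau : {perm 'I_n}) :
  2 <= n ->
  #[tau]%g = 2 ->
  (forall x : 'I_n, val x = n.-1 -> val (tau x) = n - 2) ->
  (forall j : 'I_n, j.+3 <= n ->
     forall x : 'I_n,
       tau (((sigma n) ^+ j.+1)%g (tau x)) =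
       ((sigma n) ^+ (tau j).+1)%g
         (tau (((sigma n) ^+ (tau (rho n (tau j))).+1)%g x))) ->
  let Orb := orbits_of <<[set rho n; tau]>>%g in
  [/\ forall O, O \in Orb -> #|O| \in [:: 1; 2; 3; 6],
      #|[set O in Orb | #|O| == 2]| \in [:: 1; 2] &
      #|[set O in Orb | (#|O| == 1) || (#|O| == 3)]| = (odd n : nat)].
Proof.
move=> n_ge2 tau_order tau_last tau_rel Orb.
have tauK : involutive tau.
  by move=> x; rewrite -permM -expg2 -tau_order expg_order perm1.
have braid := tau_rho_braid n_ge2 tauK tau_last tau_rel.
split.
- by move=> O /imsetP[x _ ->]; apply: card_orbit_braid_in (@rhoK n) tauK braid x.
- exact: card_two_orbits.
rewrite /Orb /orbits_of (odd_orbitsE (@rhoK n) tauK braid) card_in_imset.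
  exact: card_rho_fixed.
by move=> x y /[!inE] /eqP rx /eqP ry _; apply: rho_fixed_eq.
Qed.
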